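(* Let $K$ be a simplicial complex and $K'\subset K$ a subcomplex. Then $K'$ is nice if and only if every simplex $\Delta\in K$ that equals the convex hull of $\Delta\cap K'$ belongs to $K'$.
   Context: A simplicial complex is a locally finite set of linear simplices in $\mathbb{R}^N$ closed under faces with pairwise intersections common faces. For $\Delta\in K$, $\Delta\cap K'$ denotes the subcomplex of $K'$ consisting of the simplices of $K'$ that are faces of $\Delta$ (the maximal subcomplex of $K'$ contained in $\Delta$). Two simplices are adjacent if they share a face; $\operatorname{star}(K')$ is the set of simplices of $K$ adjacent to some simplex of $K'$, together with their faces. $K'$ is nice if for every $\Delta\in\operatorname{star}(K')$, the subcomplex $\Delta\cap K'$ is a (single) face of $\Delta$ together with its faces. *)

From HB Require Import structures.
From mathcomp Require Import all_boot all_order all_algebra finmap.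
From mathcomp Require Import reals.
Set Implicit Arguments. Unset Strict Implicit. Unset Printing Implicit Defensive.
Import Order.TTheory GRing.Theory Num.Theory.
Local Open Scope ring_scope.
Local Open Scope fset_scope.

Section SimplicialDefs.
Variables (R : realType) (N : nat).

Definition point := 'rV[R]_N.

(* A linear simplex is represented by its (finite) vertex set; the geometric
   simplex is the convex hull [conv s] of the vertices. *)
Definition vsimplex := {fset point}.

Definition hull (S : point -> Prop) : point -> Prop :=
  fun p => exists (s : seq point) (w : point -> R),
    [/\ (forall x, x \in s -> S x), (forall x, 0 <= w x),
        \sum_(x <- s) w x = 1 & p = \sum_(x <- s) w x *: x].

Definition conv (s : vsimplex) : point -> Prop := hull (fun x => x \in s).

Definition aff_indep (s : vsimplex) : Prop :=
  forall w : point -> R,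
    \sum_(x <- s) w x = 0 -> \sum_(x <- s) w x *: x = 0 ->
    forall x, x \in s -> w x = 0.

Definition is_simplex (s : vsimplex) : Prop := s != fset0 /\ aff_indep s.

Definition face (t s : vsimplex) : Prop := t != fset0 /\ t `<=` s.

Definition sqdist (x y : point) : R := \sum_(i < N) (x ord0 i - y ord0 i) ^+ 2.

Definition locally_finite (K : vsimplex -> Prop) : Prop :=
  forall x : point, exists r : R, 0 < r /\
    exists L : seq vsimplex, forall s, K s ->
      (exists y, conv s y /\ sqdist x y < r ^+ 2) -> s \in L.

Definition simplicial_complex (K : vsimplex -> Prop) : Prop :=
  [/\ (forall s, K s -> is_simplex s),
      (forall s t, K s -> face t s -> K t),
      (forall s t, K s -> K t ->
         (forall x, ~ (conv s x /\ conv t x)) \/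
         exists r, [/\ face r s, face r t &
                       forall x, (conv s x /\ conv t x) <-> conv r x])
    & locally_finite K].

Definition subcomplex (K' K : vsimplex -> Prop) : Prop :=
  (forall s, K' s -> K s) /\ (forall s t, K' s -> face t s -> K' t).

(* Delta ∩ K' : simplices of K' that are faces of Delta *)
Definition cap_sub (D : vsimplex) (K' : vsimplex -> Prop) : vsimplex -> Prop :=
  fun s => K' s /\ face s D.

Definition adjacent (s t : vsimplex) : Prop := exists r, face r s /\ face r t.

Definition star (K K' : vsimplex -> Prop) : vsimplex -> Prop :=
  fun s => exists t r, [/\ K t, K' r, adjacent t r & face s t].

(* nice: for Delta in star(K'), Delta ∩ K' is a face F of Delta together with
   its faces; F is allowed to be empty (then Delta ∩ K' is empty). *)
Definition nice (K K' : vsimplex -> Prop) : Prop :=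
  forall D, star K K' D ->
    exists F : vsimplex, F `<=` D /\
      forall s, cap_sub D K' s <-> face s F.

Definition hull_cap (D : vsimplex) (K' : vsimplex -> Prop) : point -> Prop :=
  hull (fun x => exists s, cap_sub D K' s /\ conv s x).

End SimplicialDefs.

(* Niceness says that the simplices of K' inside a simplex D of star(K') are
   exactly the faces of one face F of D.  If D is the convex hull of D ∩ K',
   every vertex of D lies in the convex hull of F, so F = D by affine
   independence, and D belongs to K'.  Conversely, the right face F is spanned
   by the vertices v of D with {v} in K': each face s of F is the convex hull
   of s ∩ K', which contains all vertices of s, so s belongs to K'. *)
From HB Require Import structures.
From mathcomp Require Import all_boot all_order all_algebra finmap.
From mathcomp Require Import reals boolp.
Set Implicit Arguments. Unset Strict Implicit. Unset Printing Implicit Defensive.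
Import Order.TTheory GRing.Theory Num.Theory.
Local Open Scope fset_scope.
Local Open Scope ring_scope.

Section SumsOverUniqSeq.
Variables (T : eqType) (V : nmodType).

Lemma sum_pred1_seq (r : seq T) x (g : T -> V) :
  uniq r -> x \in r -> \sum_(y <- r | x == y) g y = g x.
Proof.
move=> r_uniq xr; rewrite big_mkcond (bigD1_seq x) //= eqxx big1 ?addr0 //.
by move=> y; rewrite eq_sym => /negbTE ->.
Qed.

Lemma sum_partition_seq (r q : seq T) (g : T -> V) :
  uniq r -> {subset q <= r} ->
  \sum_(y <- r) \sum_(x <- q | x == y) g x = \sum_(x <- q) g x.
Proof.
move=> r_uniq qr; under eq_bigr do rewrite big_mkcond.
rewrite exchange_big [LHS]big_seq [RHS]big_seq; apply: eq_bigr => x xq.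
by rewrite -big_mkcond; apply: (sum_pred1_seq (fun=> g x)); rewrite ?qr.
Qed.

End SumsOverUniqSeq.

Section ConvexHulls.
Variables (R : realType) (N : nat).
Local Notation point := (point R N).
Local Notation vsimplex := (vsimplex R N).

Lemma hullS (S S' : point -> Prop) p :
  (forall x, S x -> S' x) -> hull S p -> hull S' p.
Proof.
move=> SS' [q [w [qS w0 w1 ->]]].
by exists q, w; split=> // x /qS /SS'.
Qed.

Lemma hull_inhabited (S : point -> Prop) p : hull S p -> exists x, S x.
Proof.
case=> [[|x q]] [w [qS _ w1 _]].
  by move: w1; rewrite big_nil => /eqP; rewrite eq_sym oner_eq0.
by exists x; apply: qS; rewrite mem_head.
Qed.

Lemma conv_vertex (s : vsimplex) x : x \in s -> conv s x.
Proof.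
move=> xs; exists [:: x], (fun=> 1).
by split=> [y|y||]; rewrite ?inE ?big_seq1 ?scale1r // => /eqP ->.
Qed.

Lemma convS (s t : vsimplex) p : s `<=` t -> conv s p -> conv t p.
Proof. by move=> /fsubsetP st; apply: hullS. Qed.

(* The barycentric coordinate at y of the formal combination (q, w);
   q may repeat points. *)
Definition coord (q : seq point) (w : point -> R) (y : point) : R :=
  \sum_(x <- q | x == y) w x.

Lemma coord_ge0 q w y : (forall x, 0 <= w x) -> 0 <= coord q w y.
Proof. by move=> w0; apply: sumr_ge0. Qed.

Lemma coord_notin q w y : y \notin q -> coord q w y = 0.
Proof.
move=> yq; rewrite /coord big_seq_cond big1 // => x /andP[xq /eqP xy].
by move: yq; rewrite -xy xq.
Qed.

Lemma coord_seq1 y : coord [:: y] (fun=> 1) y = 1.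
Proof. by rewrite /coord big_cons big_nil eqxx addr0. Qed.

Lemma sum_coord (D : vsimplex) q w : {subset q <= D} ->
  \sum_(y <- D) coord q w y = \sum_(x <- q) w x.
Proof. exact: sum_partition_seq (fset_uniq D). Qed.

Lemma sum_coord_scale (D : vsimplex) q w : {subset q <= D} ->
  \sum_(y <- D) coord q w y *: y = \sum_(x <- q) w x *: x.
Proof.
move=> qD; rewrite -(sum_partition_seq _ (fset_uniq D) qD).
apply: eq_bigr => y _; rewrite scaler_suml.
by apply: eq_bigr => x /eqP ->.
Qed.

Lemma conv_coords (F : vsimplex) p : conv F p ->
  exists c : point -> R, [/\ forall y, 0 <= c y, \sum_(y <- F) c y = 1
                           & p = \sum_(y <- F) c y *: y].
Proof.
case=> q [w [qF w0 w1 ->]]; exists (coord q w).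
by split=> [y||]; rewrite ?coord_ge0 ?sum_coord ?sum_coord_scale.
Qed.

Lemma hull_conv (F : vsimplex) p : hull (conv F) p -> conv F p.
Proof.
case=> q [w [qF w0 w1 ->]].
suff [c [c0 cw ->]] : exists c : point -> R,
    [/\ forall y, 0 <= c y, \sum_(y <- F) c y = \sum_(x <- q) w x
      & \sum_(x <- q) w x *: x = \sum_(y <- F) c y *: y].
  by exists F, c; split; rewrite ?cw.
elim: q qF {w1} => [|x q IHq] qF.
  exists (fun=> 0); rewrite !big_nil.
  by split=> //; rewrite big1 // => y _; rewrite scale0r.
have [cx [cx0 cx1 xE]] := conv_coords (qF x (mem_head x q)).
have [cq [cq0 cqw qE]] := IHq (fun y yq => qF y (mem_behead (s := x :: q) yq)).
exists (fun y => w x * cx y + cq y); split.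
- by move=> y; rewrite addr_ge0 ?mulr_ge0.
- by rewrite big_cons big_split /= -mulr_sumr cx1 mulr1 cqw.
- rewrite big_cons qE [X in _ *: X + _]xE scaler_sumr -big_split /=.
  by apply: eq_bigr => y _; rewrite scalerA scalerDl.
Qed.

Lemma aff_indep_coord (D : vsimplex) q1 w1 q2 w2 :
  aff_indep D -> {subset q1 <= D} -> {subset q2 <= D} ->
  \sum_(x <- q1) w1 x = \sum_(x <- q2) w2 x ->
  \sum_(x <- q1) w1 x *: x = \sum_(x <- q2) w2 x *: x ->
  {in D, coord q1 w1 =1 coord q2 w2}.
Proof.
move=> Dai q1D q2D sum_eq comb_eq y yD; apply/eqP; rewrite -subr_eq0; apply/eqP.
apply: (Dai (fun y => coord q1 w1 y - coord q2 w2 y)) yD.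
  by rewrite sumrB !sum_coord // sum_eq subrr.
under eq_bigr do rewrite scalerBl.
by rewrite sumrB !sum_coord_scale // comb_eq subrr.
Qed.

Lemma aff_indep_conv_mem (D F : vsimplex) u :
  aff_indep D -> F `<=` D -> u \in D -> conv F u -> u \in F.
Proof.
move=> Dai /fsubsetP FD uD [q [w [qF _ w_sum1 uE]]].
apply: contraT => uF.
have qD : {subset q <= D} by move=> x /qF /FD.
have uD1 : {subset [:: u] <= D} by move=> x; rewrite inE => /eqP ->.
have := aff_indep_coord (w1 := w) (w2 := fun=> 1) Dai qD uD1.
rewrite !big_seq1 /= scale1r w_sum1 -uE => /(_ erefl erefl u uD).
rewrite coord_seq1 coord_notin; last by apply: contra uF => /qF.
by move=> /eqP; rewrite eq_sym oner_eq0.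
Qed.

Lemma hull_cap_conv (D F : vsimplex) (K' : vsimplex -> Prop) p :
  (forall s, cap_sub D K' s -> s `<=` F) -> hull_cap D K' p -> conv F p.
Proof.
move=> capF /(hullS (S' := conv F)) hc; apply/hull_conv/hc.
by move=> x [s [/capF sF /(convS sF)]].
Qed.

Lemma face_fset1 (s : vsimplex) x : x \in s -> face [fset x] s.
Proof.
by move=> xs; split; [apply/fset0Pn; exists x; rewrite fset11 | rewrite fsub1set].
Qed.

Lemma face_refl (s : vsimplex) : s != fset0 -> face s s.
Proof. by split. Qed.

End ConvexHulls.

Section Niceness.
Variables (R : realType) (N : nat) (K K' : vsimplex R N -> Prop).

Definition hull_cap_closed : Prop :=
  forall D : vsimplex R N, K D ->
    (forall x, conv D x <-> hull_cap D K' x) -> K' D.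

Lemma nice_hull_cap_closed :
  (forall s, K s -> is_simplex s) -> nice K K' -> hull_cap_closed.
Proof.
move=> Ksimplex Knice D KD Dhull; have [D_neq0 Dai] := Ksimplex D KD.
have [v vD] := fset0Pn _ D_neq0.
have [_ [s [[K's sD] _]]] := hull_inhabited ((Dhull v).1 (conv_vertex vD)).
have starD : star K K' D.
  by exists D, s; split=> //; exists s; split=> //; apply/face_refl; case: sD.
have [F [FD capF]] := Knice D starD.
have DF : D `<=` F.
  apply/fsubsetP => u uD; apply: (aff_indep_conv_mem Dai FD uD).
  apply: hull_cap_conv; last exact/(Dhull u).1/conv_vertex.
  by move=> t /capF [].
by have [] := (capF D).2 (conj D_neq0 DF).
Qed.

Lemma conv_hull_cap_vertices (s : vsimplex R N) x :
  (forall v, v \in s -> K' [fset v]) -> conv s x <-> hull_cap s K' x.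
Proof.
move=> K'v; split; last by apply: hull_cap_conv => t [_ []].
apply: hullS => y ys; exists [fset y]; split; last exact/conv_vertex/fset11.
by split; [apply: K'v | apply: face_fset1].
Qed.

Lemma hull_cap_closed_nice :
  (forall s t, K s -> face t s -> K t) ->
  (forall s t, K' s -> face t s -> K' t) ->
  hull_cap_closed -> nice K K'.
Proof.
move=> Kface K'face K'closed D [t [r [Kt _ _ Dt]]].
have KD := Kface t D Kt Dt.
set F := [fset v in D | `[< K' [fset v] >]].
have FD : F `<=` D by apply/fsubsetP => v; rewrite !inE => /andP[].
exists F; split=> // s; split.
- move=> [K's [s_neq0 sD]]; split=> //; apply/fsubsetP => v vs.
  rewrite !inE (fsubsetP sD v vs) /=; apply/asboolP.
  exact: K'face K's (face_fset1 vs).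
- move=> [s_neq0 sF]; have K'v : forall v, v \in s -> K' [fset v].
    by move=> v /(fsubsetP sF); rewrite !inE => /andP[_ /asboolP].
  have sD := fsubset_trans sF FD.
  split=> //; apply: K'closed; first exact: Kface KD (conj s_neq0 sD).
  by move=> x; apply: conv_hull_cap_vertices.
Qed.

End Niceness.

Theorem lemma3p10 (R : realType) (N : nat) (K K' : vsimplex R N -> Prop) :
  simplicial_complex K -> subcomplex K' K ->
  (nice K K' <->
   forall D : vsimplex R N, K D ->
     (forall x, conv D x <-> hull_cap D K' x) -> K' D).
Proof.
move=> [Ksimplex Kface _ _] [_ K'face]; split.
- exact: nice_hull_cap_closed.
- exact: hull_cap_closed_nice.
Qed.
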